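(* For every binary matrix $A$, the base graph of $A$ is acyclic, both with respect to the binary setting and with respect to the boolean setting.
   Context: A set $X$ of $\{0,1\}$-vectors spans a vector $y$ in the binary (resp. boolean) sense if $y=\sum_{x\in X}c_xx$ with $c_x\in\{0,1\}$ using ordinary (resp. boolean, $1+1=1$) addition; $X$ spans a set $Y$ if it spans each vector of $Y$. A binary (resp. boolean) base of an $n\times m$ binary matrix $A$ is a set of $\{0,1\}$ column vectors of length $n$ spanning every column of $A$ in the corresponding sense, of minimum cardinality among such spanning sets. The base graph of $A$ (in the given setting) is the directed graph whose vertices are the bases of $A$, with a directed edge from a base $U$ to a different base $V$ whenever $U$ spans $V$. *)

From mathcomp Require Import all_boot all_algebra.
Set Implicit Arguments. Unset Strict Implicit. Unset Printing Implicit Defensive.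

(* {0,1}-vectors of length n are boolean-valued functions on 'I_n
   (true = 1, false = 0). *)
Definition vec (n : nat) := {ffun 'I_n -> bool}.

Inductive setting := Binary | Boolean.

(* X spans y: y = sum_{x in X} c_x x with c_x in {0,1}, using ordinary
   (integer) addition (Binary) or boolean addition 1+1=1 (Boolean). *)
Definition spans_vec (s : setting) (n : nat) (X : {set vec n}) (y : vec n) : Prop :=
  exists c : vec n -> bool,
    match s with
    | Binary => forall i : 'I_n, (y i : nat) = (\sum_(x in X) (c x : nat) * (x i : nat))%N
    | Boolean => forall i : 'I_n, y i = [exists x in X, c x && x i]
    end.

Definition spans_set (s : setting) (n : nat) (X Y : {set vec n}) : Prop :=
  forall y, y \in Y -> spans_vec s X y.

Definition column (n m : nat) (A : 'M[bool]_(n, m)) (j : 'I_m) : vec n :=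
  [ffun i => A i j].

Definition spans_matrix (s : setting) (n m : nat) (A : 'M[bool]_(n, m))
  (X : {set vec n}) : Prop :=
  forall j : 'I_m, spans_vec s X (column A j).

Definition is_base (s : setting) (n m : nat) (A : 'M[bool]_(n, m))
  (U : {set vec n}) : Prop :=
  spans_matrix s A U /\
  forall V : {set vec n}, spans_matrix s A V -> #|U| <= #|V|.

Definition base_edge (s : setting) (n m : nat) (A : 'M[bool]_(n, m))
  (U V : {set vec n}) : Prop :=
  is_base s A U /\ is_base s A V /\ U <> V /\ spans_set s U V.

(* directed walk U = W_0 -> W_1 -> ... -> W_k with W_1..W_k listed in p *)
Fixpoint walk (T : Type) (e : T -> T -> Prop) (x : T) (p : seq T) : Prop :=
  match p with
  | [::] => True
  | y :: p' => e x y /\ walk e y p'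
  end.

Definition acyclic (T : Type) (e : T -> T -> Prop) : Prop :=
  forall (x : T) (p : seq T), walk e x p -> last x p = x -> p = [::].

(* Spanning is a preorder on sets of vectors, and a vector can only be spanned
   by vectors lying below it componentwise.  If two bases U and V span each
   other and u is in U but not in V, then u is spanned by the elements of V
   below u, each of which is spanned by elements of U below it and different
   from u; so U minus u spans U, hence spans A, against the minimality of U.
   Thus mutually spanning bases coincide, while along a closed walk of the
   base graph the first two bases span each other. *)
From mathcomp Require Import all_boot all_algebra.
Set Implicit Arguments. Unset Strict Implicit. Unset Printing Implicit Defensive.

Section Spanning.
Variables (s : setting) (n : nat).
Implicit Types (X Y : {set vec n}) (x y z : vec n) (c : vec n -> bool).

Definition vec_le x y := [forall i, x i ==> y i].

Lemma vec_le_anti x y : vec_le x y -> vec_le y x -> x = y.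
Proof.
move=> /forallP xy /forallP yx; apply/ffunP=> i.
by move: (xy i) (yx i); case: (x i); case: (y i).
Qed.

(* [spans_vec s X y] unfolds to [exists c, combination s X c y]. *)
Definition combination X c y : Prop :=
  match s with
  | Binary => forall i, (y i : nat) = (\sum_(x in X) (c x : nat) * (x i : nat))%N
  | Boolean => forall i, y i = [exists x in X, c x && x i]
  end.

Lemma eq_combination X X' c c' y :
  (forall x, (x \in X) && c x = (x \in X') && c' x) ->
  combination X c y -> combination X' c' y.
Proof.
rewrite /combination => eqXc; case: s => comb i; rewrite comb.
- rewrite big_mkcond [RHS]big_mkcond; apply: eq_bigr => x _.
  by move: (eqXc x); case: (x \in X); case: (x \in X'); case: (c x); case: (c' x).
- by apply: eq_existsb => x; rewrite !andbA eqXc.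
Qed.

Lemma sum_term_le X (F : vec n -> nat) x : x \in X -> F x <= \sum_(z in X) F z.
Proof. by move=> xX; rewrite (bigD1 x) //= leq_addr. Qed.

Lemma combination_le X c y x :
  combination X c y -> x \in X -> c x -> vec_le x y.
Proof.
rewrite /combination; case: s => comb xX cx; apply/forallP=> i; apply/implyP=> xi.
- have := sum_term_le (fun x => (c x : nat) * (x i : nat)) xX.
  by rewrite -comb cx xi; case: (y i).
- by rewrite comb; apply/existsP; exists x; rewrite xX cx xi.
Qed.

Lemma spans_self X x : x \in X -> spans_vec s X x.
Proof.
move=> xX; exists (fun z => z == x); case: s => i.
- rewrite (bigD1 x) //= eqxx mul1n big1 ?addn0 // => z /andP[_ /negbTE->].
  by rewrite mul0n.
- apply/idP/existsP => [xi | [z /andP[_ /andP[/eqP-> //]]]].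
  by exists x; rewrite xX eqxx xi.
Qed.

Lemma spans_setS X X' : X \subset X' -> spans_set s X' X.
Proof. by move=> /subsetP sXX' x /sXX'; apply: spans_self. Qed.

Lemma spans_set_refl X : spans_set s X X.
Proof. exact: spans_setS. Qed.

Lemma spans_set_coeffs X Y : spans_set s X Y ->
  exists d : vec n -> vec n -> bool, forall y, y \in Y -> combination X (d y) y.
Proof.
move=> spXY; apply: (@fin_all_exists _ (fun=> vec n -> bool)
  (fun y d => y \in Y -> combination X d y)) => y.
case yY: (y \in Y); last by exists xpred0.
by have [c comb] := spXY y yY; exists c.
Qed.

Lemma spans_trans X Y z : spans_set s X Y -> spans_vec s Y z -> spans_vec s X z.
Proof.
move=> /spans_set_coeffs[d combY] [c]; rewrite /combination in combY *.
case: s combY => combY combZ.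
- pose N x := (\sum_(y in Y) (c y : nat) * (d y x : nat))%N.
  have sumN i : (z i : nat) = (\sum_(x in X) N x * (x i : nat))%N.
    rewrite combZ (eq_bigr _ (fun y yY => congr1 _ (combY y yY i))).
    under eq_bigr do rewrite big_distrr.
    rewrite exchange_big; apply: eq_bigr => x _ /=; rewrite big_distrl.
    by apply: eq_bigr => y _; rewrite mulnA.
  (* each term is at most [z i <= 1], so only the positivity of [N x] matters *)
  exists (fun x => 0 < N x) => i; rewrite sumN; apply: eq_bigr => x xX.
  have := sum_term_le (fun x => N x * (x i : nat)) xX; rewrite /= -sumN.
  by case: (z i); case: (x i); case: (N x) => [|[|k]]; rewrite ?muln0 ?muln1.
- exists (fun x => [exists y in Y, c y && d y x]) => i; rewrite combZ.
  apply/existsP/existsP.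
  + move=> [y /andP[yY /andP[cy]]]; rewrite (combY y yY i).
    case/existsP=> x /andP[xX /andP[dx xi]].
    by exists x; rewrite xX xi andbT; apply/existsP; exists y; rewrite yY cy dx.
  + move=> [x /andP[xX /andP[/existsP[y /andP[yY /andP[cy dx]]] xi]]].
    exists y; rewrite yY cy (combY y yY i); apply/existsP; exists x.
    by rewrite xX dx xi.
Qed.

Lemma spans_set_trans X Y Z :
  spans_set s X Y -> spans_set s Y Z -> spans_set s X Z.
Proof. by move=> spXY spYZ z /spYZ; apply: spans_trans. Qed.

Lemma spans_below X y : spans_vec s X y -> spans_vec s [set x in X | vec_le x y] y.
Proof.
move=> [c comb]; exists c; apply: eq_combination (comb) => x; rewrite inE.
case xX: (x \in X) => //=; case cx: (c x); rewrite ?andbF //.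
by rewrite (combination_le comb xX cx).
Qed.

Section Bases.
Variables (m : nat) (A : 'M[bool]_(n, m)).

Lemma base_mutual_subset U V : is_base s A U ->
  spans_set s U V -> spans_set s V U -> U \subset V.
Proof.
move=> [spAU minU] spUV spVU; apply/subsetP => u uU; apply/negPn/negP => uV.
pose W := U :\ u; pose Vu := [set v in V | vec_le v u].
have spWVu : spans_set s W Vu.
  move=> v; rewrite inE => /andP[vV vu].
  apply: spans_trans (spans_below (spUV v vV)); apply: spans_setS.
  apply/subsetP=> x; rewrite !inE => /andP[xU xv]; rewrite xU andbT.
  by apply: contraNneq uV => xu; rewrite -(vec_le_anti vu) // -xu.
have spWu : spans_vec s W u.
  apply: spans_trans spWVu _; apply: spans_trans (spans_below (spVU u uU)).
  by apply: spans_setS; apply/subsetP=> v; rewrite !inE.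
have spWU : spans_set s W U.
  move=> x xU; have [-> // | xu] := eqVneq x u.
  by apply: spans_self; rewrite !inE xu.
have := minU W (fun j => spans_trans spWU (spAU j)).
by rewrite (cardsD1 u U) uU add1n ltnn.
Qed.

Lemma base_mutual_eq U V : is_base s A U -> is_base s A V ->
  spans_set s U V -> spans_set s V U -> U = V.
Proof.
move=> baseU [spAV minV] spUV spVU; apply/eqP.
by rewrite eqEcard (base_mutual_subset baseU spUV spVU) (minV _ baseU.1).
Qed.

Lemma walk_spans_last U p : walk (base_edge s A) U p -> spans_set s U (last U p).
Proof.
elim: p U => [|V p IHp] U /=; first by move=> _; apply: spans_set_refl.
by move=> [[_ [_ [_ spUV]]] /IHp]; apply: spans_set_trans.
Qed.

Lemma base_graph_acyclic : acyclic (base_edge s A).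
Proof.
move=> U [|V p] //= [[baseU [baseV [neqUV spUV]]] walkV] closed.
have := walk_spans_last walkV; rewrite closed => spVU.
by case: neqUV; apply: base_mutual_eq.
Qed.

End Bases.
End Spanning.

Theorem mainTheorem16 :
  forall (n m : nat) (A : 'M[bool]_(n, m)),
    acyclic (base_edge Binary A) /\ acyclic (base_edge Boolean A).
Proof. by move=> n m A; split; apply: base_graph_acyclic. Qed.
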